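(* Let $\alpha\in (0,1)$ be a real number and let $a_1,a_2,\ldots,a_n\in [0,\alpha]$ be reals with $\sum_{\ell=1}^n a_\ell=1$. Then the numbers $a_1,\ldots,a_n$ can be partitioned into $2\lceil 1/\alpha\rceil-1$ (possibly empty) groups such that the sum of the numbers in each group is at most $\alpha$. *)

From mathcomp Require Import all_boot all_order all_algebra.
Set Implicit Arguments. Unset Strict Implicit. Unset Printing Implicit Defensive.

From mathcomp Require Import all_boot all_order all_algebra.
From mathcomp Require Import zify lra.
Set Implicit Arguments. Unset Strict Implicit. Unset Printing Implicit Defensive.
Import Order.TTheory GRing.Theory Num.Theory.
Local Open Scope ring_scope.

(* With K := 2 * ceil(1/alpha) - 1 groups we have (K + 1) * alpha >= 2.  Items
   larger than alpha/2 are fewer than K + 1, since their total is at most 1, so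
   each of them gets a group of its own.  The remaining items, each at most
   alpha/2, are added one by one to a least loaded group: its load is at most
   (1 - a x) / K, and (1 - a x) / K + a x <= alpha because a x <= alpha/2 and
   (K + 1) * alpha >= 2. *)

Lemma exists_le_mean (R : realDomainType) m (F : 'I_m.+1 -> R) :
  exists j, m.+1%:R * F j <= \sum_j F j.
Proof.
have [j _ Fmin] := @arg_minP _ _ _ ord0 predT F erefl.
exists j; rewrite mulr_natl -[in X in _ *+ X](card_ord m.+1) -sumr_const.
by apply: ler_sum => i _; apply: Fmin.
Qed.

Lemma ler_sum_subset (R : numDomainType) (I : finType) (A : {pred I}) (F : I -> R) :
  (forall i, 0 <= F i) -> \sum_(i in A) F i <= \sum_i F i.
Proof.
by move=> F_ge0; rewrite [leRHS](bigID [in A]) /= lerDl sumr_ge0.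
Qed.

Section GroupLoads.

Variables (R : pzRingType) (I : finType) (k : nat) (a : I -> R).

Definition load (g : I -> 'I_k) (P : {set I}) j := \sum_(l in P | g l == j) a l.

Lemma sum_load (g : I -> 'I_k) (P : {set I}) : \sum_j load g P j = \sum_(l in P) a l.
Proof. by rewrite [RHS](partition_big g predT). Qed.

Lemma load_setU1 (g : I -> 'I_k) (P : {set I}) x (j0 j : 'I_k) : x \notin P ->
  load (fun l => if l == x then j0 else g l) (x |: P) j
  = (if j0 == j then a x else 0) + load g P j.
Proof.
move=> xNP; rewrite /load !big_mkcondr big_setU1 //= eqxx; congr (_ + _).
by apply: eq_bigr => l lP; case: (l =P x) => // lx; rewrite -lx lP in xNP.
Qed.

End GroupLoads.

Section Packing.

Variables (R : realFieldType) (n k : nat) (alpha : R) (a : 'I_n -> R).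
Hypotheses (a_ge0 : forall l, 0 <= a l) (a_le : forall l, a l <= alpha).
Hypothesis a_sum : \sum_l a l = 1.
Hypothesis enough_groups : 2 <= k.+2%:R * alpha.

Lemma sum_in_le1 (A : {pred 'I_n}) : \sum_(l in A) a l <= 1.
Proof. by rewrite -a_sum ler_sum_subset. Qed.

Lemma alpha_gt0 : 0 < alpha.
Proof. by rewrite -(pmulr_rgt0 _ (ltr0Sn R k.+1)); apply: lt_le_trans enough_groups. Qed.

Definition big_items := [set l | alpha / 2 < a l].

Lemma card_big_items : (#|big_items| <= k.+1)%N.
Proof.
rewrite leqNgt; apply/negP => big_gt.
have [l0 l0_big] : exists l0, l0 \in big_items.
  by apply/card_gt0P; apply: leq_trans big_gt.
have sum_gt : #|big_items|%:R * (alpha / 2) < \sum_(l in big_items) a l.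
  rewrite mulr_natl -sumr_const; apply: ltr_sum.
    by apply/hasP; exists l0; rewrite ?mem_index_enum.
  by move=> l; rewrite inE.
have : k.+2%:R * alpha <= #|big_items|%:R * alpha.
  by rewrite ler_wpM2r ?ler_nat // ltW // alpha_gt0.
have := sum_in_le1 big_items; have := enough_groups; lra.
Qed.

Definition big_rank l : 'I_k.+1 := inord (index l (enum big_items)).

Lemma big_rank_inj : {in big_items &, injective big_rank}.
Proof.
have index_small l : l \in big_items -> (index l (enum big_items) < k.+1)%N.
  move=> l_big; apply: leq_trans card_big_items.
  by rewrite cardE index_mem mem_enum.
move=> l l' l_big l'_big /(congr1 val); rewrite /= !inordK ?index_small //.
by move/(congr1 (nth l (enum big_items))); rewrite !nth_index ?mem_enum.
Qed.

Lemma load_big_rank j : load a big_rank big_items j <= alpha.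
Proof.
rewrite /load; case: (pickP [pred l in big_items | big_rank l == j]).
  move=> l /andP [l_big /eqP rank_l]; rewrite (big_pred1 l) // => l' /=.
  apply/andP/eqP => [[l'_big /eqP rank_l']|->]; last by rewrite l_big rank_l.
  by apply: big_rank_inj; rewrite // rank_l rank_l'.
by move=> none; rewrite big_pred0 // ltW // alpha_gt0.
Qed.

Lemma first_fit_step (g : 'I_n -> 'I_k.+1) (P : {set 'I_n}) x :
  a x <= alpha / 2 -> x \notin P -> exists j, load a g P j + a x <= alpha.
Proof.
move=> x_small xNP; have [j min_load] := exists_le_mean (load a g P).
exists j; rewrite sum_load in min_load.
have := sum_in_le1 (x |: P); rewrite big_setU1 //= => total_le1.
have : 0 <= k%:R * (alpha / 2 - a x) by rewrite mulr_ge0 ?subr_ge0.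
have : 0 <= k%:R :> R by [].
have := enough_groups; rewrite -!natr1 in min_load *.
nra.
Qed.

Lemma first_fit (s : seq 'I_n) : {in s, forall x, a x <= alpha / 2} ->
  exists g : 'I_n -> 'I_k.+1,
    forall j, load a g (big_items :|: [set:: s]) j <= alpha.
Proof.
elim: s => [_|x s IHs /forall_cons[x_small /IHs [g g_fits]]].
  by exists big_rank => j; rewrite setU0; apply: load_big_rank.
rewrite set_cons setUCA; case: (boolP (x \in big_items :|: [set:: s])).
  by move=> x_in; exists g; rewrite (setUidPr _) // sub1set.
move=> xNP; have [j0 fits_j0] := first_fit_step g x_small xNP.
exists (fun l => if l == x then j0 else g l) => j.
rewrite load_setU1 //; case: eqP => [<-|_]; first by rewrite addrC.
by rewrite add0r.
Qed.

End Packing.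

Lemma groups_from_ceil (R : archiRealFieldType) (alpha : R) (k : nat) :
  0 < alpha -> (k%:Z = 2 * Num.ceil alpha^-1 - 1)%R ->
  (0 < k)%N /\ 2 <= k.+1%:R * alpha.
Proof.
move=> alpha_gt0 k_def; set c := Num.ceil alpha^-1 in k_def.
have inv_le_c : alpha^-1 <= c%:~R := ceil_ge _.
have c_gt0 : 0 < c by rewrite -(ltr0z R) (lt_le_trans _ inv_le_c) ?invr_gt0.
split; first lia.
have -> : k.+1%:R = 2 * c%:~R :> R.
  by rewrite -natr1 -[k%:R]/((k%:Z)%:~R) k_def intrD intrM intrN addrNK.
have : 1 <= c%:~R * alpha.
  by rewrite -[leLHS](mulVf (lt0r_neq0 alpha_gt0)) ler_pM2r.
lra.
Qed.

Theorem lemma6p2 (R : archiRealFieldType) (alpha : R) (n k : nat) (a : 'I_n -> R) :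
  0 < alpha -> alpha < 1 ->
  (forall l, 0 <= a l <= alpha) ->
  \sum_(l < n) a l = 1 ->
  (k%:Z = 2 * Num.ceil (alpha^-1) - 1)%R ->
  exists g : 'I_n -> 'I_k,
    forall j : 'I_k, \sum_(l < n | g l == j) a l <= alpha.
Proof.
move=> alpha_gt0 _ a_bounds a_sum k_def.
have [a_ge0 a_le] : (forall l, 0 <= a l) /\ (forall l, a l <= alpha).
  by split=> l; case/andP: (a_bounds l).
have [k_gt0 enough_groups] := groups_from_ceil alpha_gt0 k_def.
case: k k_gt0 enough_groups {k_def} => // k _ enough_groups.
have small_rest : {in enum (~: big_items alpha a), forall x, a x <= alpha / 2}.
  by move=> x; rewrite mem_enum !inE leNgt.
have [g g_fits] := first_fit a_ge0 a_le a_sum enough_groups small_rest.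
exists g => j; have := g_fits j; rewrite /load.
have -> : big_items alpha a :|: [set:: enum (~: big_items alpha a)] = setT.
  by apply/setP => l; rewrite !inE mem_enum !inE orbN.
by under eq_bigl => l do rewrite in_setT.
Qed.
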